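(* Let $\mathfrak{M}$ be a structure of vocabulary $\{+,\cdot,+',\cdot'\}$ (all four symbols binary function symbols) which is a model of $P(+,\cdot,\{+',\cdot'\})\cup P(+',\cdot',\{+,\cdot\})$. Then there is an isomorphism $\pi:\mathfrak{M}\restriction\{+,\cdot\}\cong\mathfrak{M}\restriction\{+',\cdot'\}$, and moreover $\pi$ is first order definable on $\mathfrak{M}$.
   Context: $P(+,\cdot)$ denotes the first order Peano axioms in the vocabulary $\{+,\cdot\}$, with Induction Schema $\forall x_1\ldots x_n((\phi(0,\bar x)\wedge\forall y(\phi(y,\bar x)\to\phi(y+1,\bar x)))\to\forall y\phi(y,\bar x))$, where $0$ and $1$ are defined terms denoting the identity elements of $+$ and $\cdot$ respectively. For a vocabulary $L$, $P(+,\cdot,L)$ denotes the extension of $P(+,\cdot)$ in which the Induction Schema is taken for all first order formulas $\phi(y,x_1,\ldots,x_n)$ of the vocabulary $\{+,\cdot\}\cup L$. $P(+',\cdot',L)$ is defined analogously for the vocabulary $\{+',\cdot'\}$ (with $0',1'$ the identity elements of $+',\cdot'$). $\mathfrak{M}\restriction L_0$ denotes the reduct of $\mathfrak{M}$ to $L_0$. First order definable means definable by a first order formula of vocabulary $\{+,\cdot,+',\cdot'\}$ in $\mathfrak{M}$. *)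

From Stdlib Require Import Arith.

Inductive fsym : Type := FAdd | FMul | FAdd' | FMul'.

Inductive term : Type :=
| Var : nat -> term
| App : fsym -> term -> term -> term.

Inductive formula : Type :=
| FEq : term -> term -> formula
| FFalse : formula
| FNot : formula -> formula
| FAnd : formula -> formula -> formula
| FOr : formula -> formula -> formula
| FImp : formula -> formula -> formula
| FAll : nat -> formula -> formula
| FEx : nat -> formula -> formula.

Record structure : Type := Structure {
  carrier :> Type;
  s_add : carrier -> carrier -> carrier;
  s_mul : carrier -> carrier -> carrier;
  s_add' : carrier -> carrier -> carrier;
  s_mul' : carrier -> carrier -> carrier }.

Definition interp (M : structure) (f : fsym) : M -> M -> M :=
  match f with
  | FAdd => s_add M | FMul => s_mul M | FAdd' => s_add' M | FMul' => s_mul' M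
  end.

Definition upd {M : Type} (e : nat -> M) (n : nat) (a : M) : nat -> M :=
  fun k => if Nat.eqb k n then a else e k.

Fixpoint eval (M : structure) (e : nat -> M) (t : term) : M :=
  match t with
  | Var n => e n
  | App f t1 t2 => interp M f (eval M e t1) (eval M e t2)
  end.

Fixpoint sat (M : structure) (e : nat -> M) (phi : formula) : Prop :=
  match phi with
  | FEq t1 t2 => eval M e t1 = eval M e t2
  | FFalse => False
  | FNot p => ~ sat M e p
  | FAnd p q => sat M e p /\ sat M e q
  | FOr p q => sat M e p \/ sat M e q
  | FImp p q => sat M e p -> sat M e q
  | FAll n p => forall a : M, sat M (upd e n a) p
  | FEx n p => exists a : M, sat M (upd e n a) p
  end.

Definition is_identity {A : Type} (op : A -> A -> A) (z : A) : Prop :=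
  forall x, op x z = x /\ op z x = x.

(* M satisfies P(add, mul, L), where L is the remaining two symbols:
   the first-order Peano axioms for add, mul (0 and 1 being the defined
   terms denoting the identity elements of add and mul), with the
   Induction Schema for ALL formulas of the full vocabulary
   {+, ., +', .'}.  The induction variable y is variable 0; all other
   variables of phi are the parameters x1..xn, given by the valuation e. *)
Definition Peano (M : structure) (add mul : M -> M -> M) : Prop :=
  (exists z : M, is_identity add z) /\
  (exists u : M, is_identity mul u) /\
  forall z u : M, is_identity add z -> is_identity mul u ->
    (forall x, add x u <> z) /\
    (forall x y, add x u = add y u -> x = y) /\
    (forall x, add x z = x) /\
    (forall x y, add x (add y u) = add (add x y) u) /\
    (forall x, mul x z = z) /\
    (forall x y, mul x (add y u) = add (mul x y) x) /\
    (forall (phi : formula) (e : nat -> M),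
        sat M (upd e 0 z) phi ->
        (forall y, sat M (upd e 0 y) phi -> sat M (upd e 0 (add y u)) phi) ->
        forall y, sat M (upd e 0 y) phi).

Definition iso_reducts (M : structure) (pi : M -> M) : Prop :=
  (forall x y, pi x = pi y -> x = y) /\
  (forall y, exists x, pi x = y) /\
  (forall x y, pi (s_add M x y) = s_add' M (pi x) (pi y)) /\
  (forall x y, pi (s_mul M x y) = s_mul' M (pi x) (pi y)).

(* pi is first order definable in M (without parameters): some formula
   psi(v0, v1) of vocabulary {+,.,+',.'} defines the graph of pi. *)
Definition fo_definable_fun (M : structure) (pi : M -> M) : Prop :=
  exists psi : formula,
    forall (e : nat -> M) (a b : M),
      sat M (upd (upd e 0 a) 1 b) psi <-> pi a = b.

(* Each of the two Peano structures can carry out Goedel's beta-function coding of finite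
   sets, since every induction involved is on a formula of the full vocabulary. Hence a
   single formula expresses "there is a coded finite map f on [0, x] with f 0 = 0',
   f (a + 1) = f a +' 1' and f x = y". Induction in the first structure shows that this
   relation is the graph of a function pi that preserves addition and multiplication and
   is injective; induction in the second structure shows that pi is onto. *)

From Stdlib Require Import PeanoNat Classical Ring IndefiniteDescription.

Section Expressibility.
Variable M : structure.

Definition env := nat -> M.

Definition expressible (P : env -> Prop) : Prop :=
  exists phi, forall e, sat M e phi <-> P e.

Definition term_expressible (T : env -> M) : Prop :=
  exists t, forall e, eval M e t = T e.

Definition definable (P : M -> Prop) : Prop :=
  exists phi (e : env), forall y, sat M (upd e 0 y) phi <-> P y.

Lemma term_expressible_var k : term_expressible (fun e => e k).
Proof. now exists (Var k). Qed.

Lemma term_expressible_app f T1 T2 :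
  term_expressible T1 -> term_expressible T2 ->
  term_expressible (fun e => interp M f (T1 e) (T2 e)).
Proof. intros [t1 H1] [t2 H2]; exists (App f t1 t2); intro e; simpl; now rewrite H1, H2. Qed.

Lemma expressible_eq T1 T2 :
  term_expressible T1 -> term_expressible T2 -> expressible (fun e => T1 e = T2 e).
Proof. intros [t1 H1] [t2 H2]; exists (FEq t1 t2); intro e; simpl; now rewrite H1, H2. Qed.

Lemma expressible_False : expressible (fun _ => False).
Proof. exists FFalse; easy. Qed.

Lemma expressible_and P Q :
  expressible P -> expressible Q -> expressible (fun e => P e /\ Q e).
Proof. intros [p Hp] [q Hq]; exists (FAnd p q); intro e; simpl; now rewrite Hp, Hq. Qed.

Lemma expressible_or P Q :
  expressible P -> expressible Q -> expressible (fun e => P e \/ Q e).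
Proof. intros [p Hp] [q Hq]; exists (FOr p q); intro e; simpl; now rewrite Hp, Hq. Qed.

Lemma expressible_imp P Q :
  expressible P -> expressible Q -> expressible (fun e => P e -> Q e).
Proof. intros [p Hp] [q Hq]; exists (FImp p q); intro e; simpl; now rewrite Hp, Hq. Qed.

Lemma upd_eq (e : env) n a : upd e n a n = a.
Proof. unfold upd; now rewrite Nat.eqb_refl. Qed.

Lemma expressible_forall n (B : env -> M -> Prop) :
  expressible (fun e => B e (e n)) -> expressible (fun e => forall a, B (upd e n a) a).
Proof.
  intros [p H]; exists (FAll n p); intro e; simpl.
  split; intros K a; specialize (K a); [apply H in K | apply H]; now rewrite upd_eq in *.
Qed.

Lemma expressible_exists n (B : env -> M -> Prop) :
  expressible (fun e => B e (e n)) -> expressible (fun e => exists a, B (upd e n a) a).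
Proof.
  intros [p H]; exists (FEx n p); intro e; simpl.
  split; intros [a K]; exists a; [apply H in K | apply H]; now rewrite upd_eq in *.
Qed.

Lemma expressible_identity f c (C : M -> env -> Prop) :
  is_identity (interp M f) c ->
  expressible (fun e => exists a,
    (forall w, interp M f w a = w /\ interp M f a w = w) /\ C a e) ->
  expressible (C c).
Proof.
  intros Hc [p H]; exists p; intro e; rewrite H; split.
  - intros [a [Ha K]]; replace c with a; [exact K|].
    now rewrite <- (proj1 (Ha c)), (proj2 (Hc a)).
  - intro K; now exists c.
Qed.

Lemma definable_of_expressible (Q : env -> Prop) (e0 : env) (P : M -> Prop) :
  expressible Q -> (forall y, Q (upd e0 0 y) <-> P y) -> definable P.
Proof. intros [p H] K; exists p, e0; intro y; now rewrite H. Qed.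

End Expressibility.

(* The quantified variable is stored at the first index [n] that the body does not read:
   exactly then the body is convertible to one reading [upd e n a]. *)
Ltac expressible_quantifier M B n :=
  first
    [ change (expressible M (fun e => forall a : M, B (upd e n a) a));
      apply (expressible_forall M n B)
    | change (expressible M (fun e => exists a : M, B (upd e n a) a));
      apply (expressible_exists M n B)
    | expressible_quantifier M B (S n) ].

Ltac expressible_constant :=
  match goal with
  | H : is_identity (interp ?M ?f) ?c |- expressible ?M ?P =>
    lazymatch P with context [c] =>
      let C := eval pattern c in P in
      lazymatch C with ?F c => apply (expressible_identity M f c F H) end end
  end.

Ltac expressible_step :=
  lazymatch goal with
  | |- term_expressible ?M (fun e => e ?k) => apply (term_expressible_var M k)
  | |- term_expressible ?M (fun e => interp ?M ?f (@?T1 e) (@?T2 e)) =>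
    apply (term_expressible_app M f T1 T2)
  | |- expressible ?M (fun e => False) => apply (expressible_False M)
  | |- expressible ?M (fun e => @eq _ (@?T1 e) (@?T2 e)) => apply (expressible_eq M T1 T2)
  | |- expressible ?M (fun e => @?P e /\ @?Q e) => apply (expressible_and M P Q)
  | |- expressible ?M (fun e => @?P e \/ @?Q e) => apply (expressible_or M P Q)
  | |- expressible ?M (fun e => forall a : carrier ?M, @?B e a) => expressible_quantifier M B 1
  | |- expressible ?M (fun e => exists a : carrier ?M, @?B e a) => expressible_quantifier M B 1
  | |- expressible ?M (fun e => @?P e -> @?Q e) => apply (expressible_imp M P Q)
  end.

Ltac unfold_to_vocabulary := cbv beta delta -[expressible definable interp carrier].

Ltac solve_expressible :=
  solve [ unfold_to_vocabulary;
          repeat (cbv beta; first [expressible_constant | expressible_step]) ].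

(* Replace each variable of type [M] occurring in [Q] by a fresh index of the valuation. *)
Ltac abstract_parameters M Q e0 i :=
  let a := match Q with
           | context [?a] =>
             constr:(ltac:(is_var a; lazymatch type of a with carrier M => idtac end; exact a))
           | _ => tt
           end in
  lazymatch a with
  | tt => apply (definable_of_expressible M Q e0); [solve_expressible | intro; apply iff_refl]
  | _ =>
    let F := eval pattern a in Q in
    lazymatch F with ?G a =>
      abstract_parameters M (fun e : env M => G (e i) e) (upd e0 i a) (S i) end
  end.

Ltac solve_definable :=
  unfold_to_vocabulary;
  lazymatch goal with
  | |- definable ?M ?P =>
    let x := match goal with x : carrier M |- _ => x end in
    abstract_parameters M (fun e : env M => P (e 0)) (fun _ : nat => x) 1
  end.

Ltac definable_induction ind :=
  lazymatch goal with
  | |- forall y, @?P y => apply (ind P); [solve_definable | |]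
  end.

Section PeanoArithmetic.
(* Every lemma is discharged over all the section variables, so that the next section
   can instantiate it uniformly for either pair of symbols. *)
Set Default Proof Using "All".

Variable M : structure.
Variables fa fm : fsym.
Notation add := (interp M fa).
Notation mul := (interp M fm).
Hypothesis peano : Peano M add mul.
Variables z u : M.
Hypothesis z_identity : is_identity add z.
Hypothesis u_identity : is_identity mul u.
Notation S x := (add x u).

Let axioms := proj2 (proj2 peano) z u z_identity u_identity.

Lemma succ_neq_zero x : S x <> z.
Proof. destruct axioms as (H & _); apply H. Qed.

Lemma succ_inj x y : S x = S y -> x = y.
Proof. destruct axioms as (_ & H & _); apply H. Qed.

Lemma add_succ_r x y : add x (S y) = S (add x y).
Proof. destruct axioms as (_ & _ & _ & H & _); apply H. Qed.

Lemma mul_0_r x : mul x z = z.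
Proof. destruct axioms as (_ & _ & _ & _ & H & _); apply H. Qed.

Lemma mul_succ_r x y : mul x (S y) = add (mul x y) x.
Proof. destruct axioms as (_ & _ & _ & _ & _ & H & _); apply H. Qed.

Lemma peano_ind (P : M -> Prop) :
  definable M P -> P z -> (forall y, P y -> P (S y)) -> forall y, P y.
Proof.
  destruct axioms as (_ & _ & _ & _ & _ & _ & ind).
  intros [phi [e HP]] P0 PS y; apply HP, ind.
  - now apply HP.
  - intros y' K; now apply HP, PS, HP.
Qed.

Lemma add_0_l x : add z x = x. Proof. apply z_identity. Qed.
Lemma add_0_r x : add x z = x. Proof. apply z_identity. Qed.
Lemma mul_1_l x : mul u x = x. Proof. apply u_identity. Qed.

Lemma add_succ_l x y : add (S x) y = S (add x y).
Proof.
  revert y; definable_induction peano_ind.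
  - now rewrite !add_0_r.
  - intros y IH; now rewrite !add_succ_r, IH.
Qed.

Lemma add_comm x y : add x y = add y x.
Proof.
  revert y; definable_induction peano_ind.
  - now rewrite add_0_r, add_0_l.
  - intros y IH; now rewrite add_succ_r, add_succ_l, IH.
Qed.

Lemma add_assoc x y w : add (add x y) w = add x (add y w).
Proof.
  revert w; definable_induction peano_ind.
  - now rewrite !add_0_r.
  - intros w IH; now rewrite !add_succ_r, IH.
Qed.

Lemma add_cancel_l x y w : add x y = add x w -> y = w.
Proof.
  revert x y w; definable_induction peano_ind.
  - intros y w; now rewrite !add_0_l.
  - intros x IH y w; rewrite !add_succ_l; intro H; now apply IH, succ_inj.
Qed.

Lemma zero_or_succ x : x = z \/ exists p, x = S p.
Proof.
  revert x; definable_induction peano_ind.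
  - now left.
  - intros y _; right; now exists y.
Qed.

Lemma mul_0_l x : mul z x = z.
Proof.
  revert x; definable_induction peano_ind.
  - apply mul_0_r.
  - intros y IH; now rewrite mul_succ_r, IH, add_0_r.
Qed.

Lemma mul_succ_l x y : mul (S x) y = add (mul x y) y.
Proof.
  revert y; definable_induction peano_ind.
  - now rewrite !mul_0_r, add_0_r.
  - intros y IH.
    now rewrite !mul_succ_r, IH, !add_assoc, !add_succ_r, (add_comm y x).
Qed.

Lemma mul_comm x y : mul x y = mul y x.
Proof.
  revert y; definable_induction peano_ind.
  - now rewrite mul_0_r, mul_0_l.
  - intros y IH; now rewrite mul_succ_r, mul_succ_l, IH.
Qed.

Lemma mul_add_distr_l x y w : mul x (add y w) = add (mul x y) (mul x w).
Proof.
  revert w; definable_induction peano_ind.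
  - now rewrite add_0_r, mul_0_r, add_0_r.
  - intros w IH; rewrite add_succ_r, !mul_succ_r, IH; apply add_assoc.
Qed.

Lemma mul_assoc x y w : mul (mul x y) w = mul x (mul y w).
Proof.
  revert w; definable_induction peano_ind.
  - now rewrite !mul_0_r.
  - intros w IH; now rewrite !mul_succ_r, IH, mul_add_distr_l.
Qed.

Lemma peano_semiring : semi_ring_theory z u add mul eq.
Proof.
  constructor.
  - exact add_0_l.
  - exact add_comm.
  - intros; symmetry; apply add_assoc.
  - exact mul_1_l.
  - exact mul_0_l.
  - exact mul_comm.
  - intros; symmetry; apply mul_assoc.
  - intros x y w; now rewrite mul_comm, mul_add_distr_l, !(mul_comm w).
Qed.

Add Ring peano_ring : peano_semiring.

Definition le x y := exists k, add x k = y.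
Definition lt x y := le (S x) y.

Lemma add_eq_0_l x y : add x y = z -> x = z.
Proof.
  destruct (zero_or_succ x) as [-> | [p ->]]; [easy|].
  rewrite add_succ_l; intro H; now destruct (succ_neq_zero _ H).
Qed.

Lemma one_eq_succ_0 : u = S z.
Proof. now rewrite add_0_l. Qed.

Lemma one_neq_0 : u <> z.
Proof. rewrite one_eq_succ_0; apply succ_neq_zero. Qed.

Lemma mul_eq_0 a b : mul a b = z -> a = z \/ b = z.
Proof.
  destruct (zero_or_succ a) as [-> | [p ->]]; [now left|].
  destruct (zero_or_succ b) as [-> | [q ->]]; [now right|].
  rewrite mul_succ_r, add_succ_r; intro H; now destruct (succ_neq_zero _ H).
Qed.

Lemma le_refl x : le x x.
Proof. exists z; apply add_0_r. Qed.

Lemma le_trans x y w : le x y -> le y w -> le x w.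
Proof. intros [k1 <-] [k2 <-]; exists (add k1 k2); now rewrite add_assoc. Qed.

Lemma le_0_l x : le z x.
Proof. exists x; apply add_0_l. Qed.

Lemma le_0_r x : le x z -> x = z.
Proof. intros [k H]; exact (add_eq_0_l _ _ H). Qed.

Lemma le_add_r x y : le x (add x y).
Proof. now exists y. Qed.

Lemma le_add_l x y : le y (add x y).
Proof. exists x; apply add_comm. Qed.

Lemma le_succ_r x y : le x y -> le x (S y).
Proof. intros [k <-]; exists (S k); now rewrite add_succ_r. Qed.

Lemma le_succ_diag_r x : le x (S x).
Proof. apply le_succ_r, le_refl. Qed.

Lemma succ_le_mono x y : le x y -> le (S x) (S y).
Proof. intros [k <-]; exists k; now rewrite add_succ_l. Qed.

Lemma lt_succ_r x y : lt x (S y) -> le x y.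
Proof. intros [k H]; exists k; rewrite add_succ_l in H; now apply succ_inj. Qed.

Lemma lt_le_incl x y : lt x y -> le x y.
Proof. apply le_trans, le_succ_diag_r. Qed.

Lemma lt_irrefl x : ~ lt x x.
Proof.
  intros [k H]; rewrite add_succ_l, <- add_succ_r in H.
  rewrite <- (add_0_r x) in H at 2; apply add_cancel_l in H.
  exact (succ_neq_zero _ H).
Qed.

Lemma nlt_0_r x : ~ lt x z.
Proof. intro H; apply le_0_r in H; exact (succ_neq_zero _ H). Qed.

Lemma le_lt_trans x y w : le x y -> lt y w -> lt x w.
Proof. intro H; apply le_trans, succ_le_mono, H. Qed.

Lemma lt_eq_cases x y : le x y -> x = y \/ lt x y.
Proof.
  intros [k <-]; destruct (zero_or_succ k) as [-> | [p ->]].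
  - left; symmetry; apply add_0_r.
  - right; exists p; now rewrite add_succ_l, add_succ_r.
Qed.

Lemma le_succ_r_cases x y : le x (S y) -> le x y \/ x = S y.
Proof.
  intro H; destruct (lt_eq_cases _ _ H) as [E | E]; [now right|].
  left; now apply lt_succ_r.
Qed.

Lemma lt_succ_cases p k : lt p (S k) <-> lt p k \/ p = k.
Proof.
  split.
  - intro H; destruct (lt_eq_cases _ _ (lt_succ_r _ _ H)); tauto.
  - intros [H | ->]; [now apply le_succ_r | apply le_refl].
Qed.

Lemma le_gt_cases x y : le x y \/ lt y x.
Proof.
  revert x; definable_induction peano_ind.
  - left; apply le_0_l.
  - intros x [H | H].
    + destruct (lt_eq_cases _ _ H) as [<- | H']; [right; apply le_refl | now left].
    + right; now apply le_succ_r.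
Qed.

Lemma div_mod_exists t : t <> z -> forall s, exists q r, s = add (mul q t) r /\ lt r t.
Proof.
  intro Ht; definable_induction peano_ind.
  - exists z, z; split; [ring|].
    destruct (zero_or_succ t) as [-> | [p ->]]; [easy|].
    apply succ_le_mono, le_0_l.
  - intros s (q & r & -> & H); destruct (lt_eq_cases _ _ H) as [<- | E].
    + exists (S q), z; split; [ring|].
      apply (le_lt_trans _ r); [apply le_0_l | exact H].
    + exists q, (S r); split; [ring | exact E].
Qed.

Definition dvd a b := exists k, b = mul k a.

Lemma dvd_0_r a : dvd a z.
Proof. exists z; now rewrite mul_0_l. Qed.

Lemma dvd_factor_l a k : dvd a (mul a k).
Proof. exists k; apply mul_comm. Qed.

Lemma dvd_factor_r a k : dvd a (mul k a).
Proof. now exists k. Qed.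

Lemma dvd_mul_l a b c : dvd a b -> dvd a (mul b c).
Proof. intros [k ->]; exists (mul k c); ring. Qed.

Lemma dvd_mul_r a b c : dvd a b -> dvd a (mul c b).
Proof. intros [k ->]; exists (mul c k); ring. Qed.

Lemma dvd_trans a b c : dvd a b -> dvd b c -> dvd a c.
Proof. intros [k1 ->] [k2 ->]; exists (mul k2 k1); ring. Qed.

Lemma dvd_add_cancel_r a x y : dvd a x -> dvd a (add x y) -> dvd a y.
Proof.
  intros [i ->] [j Hj]; destruct (le_gt_cases i j) as [[k <-] | [k <-]].
  - exists k; apply (add_cancel_l (mul i a)); rewrite Hj; ring.
  - assert (E : add (mul j a) (add (mul (S k) a) y) = add (mul j a) z).
    { rewrite add_0_r; rewrite <- Hj at 2; ring. }
    apply add_cancel_l in E.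
    destruct (mul_eq_0 _ _ (add_eq_0_l _ _ E)) as [K | ->]; [now destruct (succ_neq_zero _ K)|].
    rewrite mul_0_r, add_0_l in E; subst y; apply dvd_0_r.
Qed.

Lemma dvd_le a b : dvd a b -> b <> z -> le a b.
Proof.
  intros [k ->] Hb; destruct (zero_or_succ k) as [-> | [p ->]].
  - now rewrite mul_0_l in Hb.
  - rewrite mul_succ_l; apply le_add_l.
Qed.

Lemma dvd_one a : dvd a u -> a = u.
Proof.
  intro H; pose proof (dvd_le _ _ H one_neq_0) as Hle.
  rewrite one_eq_succ_0 in Hle |- *; destruct (le_succ_r_cases _ _ Hle) as [K | K]; [|exact K].
  apply le_0_r in K; subst a; destruct H as [k Hk].
  rewrite mul_0_r in Hk; now destruct one_neq_0.
Qed.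

(* The hypothesis is the instance of the induction schema that the argument needs. *)
Lemma least_element (P : M -> Prop) :
  definable M (fun n => forall k, le k n -> ~ P k) ->
  forall a, P a -> exists m, P m /\ forall k, P k -> le m k.
Proof.
  intros HP a Pa; apply NNPP; intro no_least.
  enough (below : forall n k, le k n -> ~ P k) by exact (below a a (le_refl a) Pa).
  apply (peano_ind _ HP).
  - intros k Hk Pk; apply le_0_r in Hk; subst k.
    apply no_least; exists z; split; [exact Pk | intros; apply le_0_l].
  - intros n IH k Hk Pk; destruct (le_succ_r_cases _ _ Hk) as [K | ->]; [exact (IH k K Pk)|].
    apply no_least; exists (S n); split; [exact Pk|].
    intros j Pj; destruct (le_gt_cases (S n) j) as [K | K]; [exact K|].
    now destruct (IH j (lt_succ_r _ _ K)).
Qed.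

Definition coprime a b := forall g, dvd g a -> dvd g b -> g = u.

(* The least positive [t] with [a | t c] divides every [s] with [a | s c]: the remainder
   of [s] modulo [t] satisfies the same condition and is smaller than [t]. *)
Lemma least_multiplier_dvd a c t :
  t <> z -> dvd a (mul t c) -> (forall r, r <> z -> dvd a (mul r c) -> le t r) ->
  forall s, dvd a (mul s c) -> dvd t s.
Proof.
  intros Ht Htc least s Hs; destruct (div_mod_exists t Ht s) as (q & r & -> & Hr).
  destruct (classic (r = z)) as [-> | Hrz]; [rewrite add_0_r; apply dvd_factor_r|].
  assert (Hrc : dvd a (mul r c)).
  { apply (dvd_add_cancel_r _ (mul (mul q t) c)).
    - replace (mul (mul q t) c) with (mul q (mul t c)) by ring.
      apply dvd_mul_r, Htc.
    - replace (add (mul (mul q t) c) (mul r c)) with (mul (add (mul q t) r) c) by ring.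
      exact Hs. }
  destruct (lt_irrefl t (le_lt_trans _ _ _ (least r Hrz Hrc) Hr)).
Qed.

Lemma gauss a b c : a <> z -> coprime a b -> dvd a (mul b c) -> dvd a c.
Proof.
  intros Ha Hab Hbc.
  assert (Hdef : definable M (fun n => forall k, le k n -> ~ (k <> z /\ dvd a (mul k c))))
    by solve_definable.
  destruct (least_element _ Hdef a (conj Ha (dvd_factor_l a c))) as (t & [Ht Htc] & least).
  pose proof (least_multiplier_dvd a c t Ht Htc (fun r Hr Hrc => least r (conj Hr Hrc))) as Hdvd.
  assert (t = u) as -> by (apply Hab; apply Hdvd; [apply dvd_factor_l | exact Hbc]).
  now rewrite mul_1_l in Htc.
Qed.

(* Goedel's beta-function coding: when [d] is a multiple of every [i <= N], the moduli
   [1 + (p + 1) d] for [p <= N] are pairwise coprime, so a product [c] of some of them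
   codes an arbitrary subset of [0..N]. *)
Definition beta_modulus d p := add u (mul (S p) d).
Definition in_code c d N p := le p N /\ dvd (beta_modulus d p) c.
Definition multiple_upto N d := d <> z /\ forall i, i <> z -> le i N -> dvd i d.

Lemma beta_modulus_neq_0 d p : beta_modulus d p <> z.
Proof. intro H; exact (one_neq_0 (add_eq_0_l _ _ H)). Qed.

Lemma not_in_code_one d N p : d <> z -> ~ in_code u d N p.
Proof.
  intros Hd [_ H]; apply dvd_one in H.
  assert (E : add u (mul (S p) d) = add u z) by now rewrite add_0_r.
  apply add_cancel_l, mul_eq_0 in E.
  destruct E as [E | E]; [exact (succ_neq_zero _ E) | exact (Hd E)].
Qed.

Lemma multiple_upto_exists N : exists d, multiple_upto N d.
Proof.
  revert N; definable_induction peano_ind.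
  - exists u; split; [exact one_neq_0|].
    intros i Hi HiN; now destruct (Hi (le_0_r _ HiN)).
  - intros N [d [Hd0 Hd]]; exists (mul d (S N)); split.
    + intro H; destruct (mul_eq_0 _ _ H) as [H' | H'];
        [exact (Hd0 H') | exact (succ_neq_zero _ H')].
    + intros i Hi HiN; destruct (le_succ_r_cases _ _ HiN) as [K | ->].
      * now apply dvd_mul_l, Hd.
      * apply dvd_factor_r.
Qed.

(* A common divisor [g] of both moduli divides their difference [(k - p) d]; it is coprime
   to [d], hence divides [k - p], which divides [d]; so [g] divides [1]. *)
Lemma beta_modulus_coprime_lt N d p k :
  multiple_upto N d -> le k N -> lt p k -> coprime (beta_modulus d p) (beta_modulus d k).
Proof.
  intros [Hd0 Hd] HkN [j' Hj'] g Hgp Hgk.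
  set (j := S j').
  assert (Ek : beta_modulus d k = add (beta_modulus d p) (mul j d))
    by (unfold beta_modulus, j; rewrite <- Hj'; ring).
  assert (Hg_d : coprime g d).
  { intros h Hhg Hhd; apply dvd_one, (dvd_add_cancel_r _ (mul (S p) d)).
    - now apply dvd_mul_r.
    - rewrite add_comm; exact (dvd_trans _ _ _ Hhg Hgp). }
  assert (Hg0 : g <> z).
  { intros ->; destruct Hgp as [k0 Hk0]; rewrite mul_0_r in Hk0.
    exact (beta_modulus_neq_0 _ _ Hk0). }
  assert (Hgj : dvd g j).
  { apply (gauss g d j Hg0 Hg_d); rewrite mul_comm.
    apply (dvd_add_cancel_r _ (beta_modulus d p)); [exact Hgp | now rewrite <- Ek]. }
  assert (Hjd : dvd j d).
  { apply Hd; [apply succ_neq_zero|].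
    apply (le_trans _ k); [exists p; rewrite <- Hj'; unfold j; ring | exact HkN]. }
  apply dvd_one, (dvd_add_cancel_r _ (mul (S p) d)).
  - exact (dvd_mul_r _ _ _ (dvd_trans _ _ _ Hgj Hjd)).
  - rewrite add_comm; exact Hgp.
Qed.

Lemma beta_modulus_coprime N d p k :
  multiple_upto N d -> le p N -> le k N -> p <> k ->
  coprime (beta_modulus d p) (beta_modulus d k).
Proof.
  intros Hd Hp Hk Hpk; destruct (le_gt_cases p k) as [H | H].
  - destruct (lt_eq_cases _ _ H) as [E | E]; [easy|].
    exact (beta_modulus_coprime_lt N d p k Hd Hk E).
  - intros g H1 H2; exact (beta_modulus_coprime_lt N d k p Hd Hp H g H2 H1).
Qed.

Lemma dvd_mul_beta_modulus N d c p k :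
  multiple_upto N d -> le p N -> le k N ->
  dvd (beta_modulus d p) (mul c (beta_modulus d k)) <-> dvd (beta_modulus d p) c \/ p = k.
Proof.
  intros Hd Hp Hk; split.
  - intro H; destruct (classic (p = k)) as [E | E]; [now right|left].
    apply (gauss _ (beta_modulus d k)); [apply beta_modulus_neq_0| |now rewrite mul_comm].
    exact (beta_modulus_coprime N d p k Hd Hp Hk E).
  - intros [H | ->]; [now apply dvd_mul_l | apply dvd_factor_r].
Qed.

Lemma code_prefix c0 d0 N0 q N d : multiple_upto N d ->
  forall k, exists c, forall p,
    in_code c d N p <-> le p N /\ (in_code c0 d0 N0 p \/ p = q) /\ lt p k.
Proof.
  intros Hd; definable_induction peano_ind.
  - exists u; intro p; split.
    + intro H; now destruct (not_in_code_one d N p (proj1 Hd)).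
    + intros (_ & _ & H); now destruct (nlt_0_r p).
  - intros k [c Hc].
    destruct (classic (le k N /\ (in_code c0 d0 N0 k \/ k = q))) as [Hk | Hk];
      unfold in_code in *.
    + exists (mul c (beta_modulus d k)); intro p; rewrite lt_succ_cases.
      split; intros [HpN H]; [rewrite (dvd_mul_beta_modulus N d) in H by tauto|].
      * destruct H as [H | ->]; [specialize (proj1 (Hc p) (conj HpN H)); tauto | tauto].
      * split; [exact HpN|]; apply (dvd_mul_beta_modulus N d); [tauto..|].
        destruct H as [H [H' | ->]]; [left; apply Hc; tauto | now right].
    + exists c; intro p; rewrite Hc, lt_succ_cases.
      split; [tauto|]; intros (HpN & Hp & [H | ->]); tauto.
Qed.

Lemma code_insert c0 d0 N0 q N : exists c d, forall p,
  in_code c d N p <-> le p N /\ (in_code c0 d0 N0 p \/ p = q).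
Proof.
  destruct (multiple_upto_exists N) as [d Hd].
  destruct (code_prefix c0 d0 N0 q N d Hd (S N)) as [c Hc].
  exists c, d; intro p; rewrite Hc; split; [tauto|].
  intros [HpN Hp]; repeat split; [exact HpN | exact Hp | now apply succ_le_mono].
Qed.

Definition pair a b := add (mul (add a b) (add a b)) a.

(* [pair a' b'] is at least [(a + b + 1)^2], which exceeds [(a + b)^2 + a]. *)
Lemma pair_neq_of_lt a b a' b' : lt (add a b) (add a' b') -> pair a b <> pair a' b'.
Proof.
  intros [j Hj] E; unfold pair in E; rewrite <- Hj in E.
  set (s := add a b) in E.
  replace (add (mul (add (S s) j) (add (S s) j)) a')
    with (add (add (mul s s) a) (S (add (add (add b s) (mul (add u u) (mul s j)))
                                      (add (add (mul (add u u) j) (mul j j)) a'))))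
    in E by (unfold s; ring).
  rewrite <- (add_0_r (add (mul s s) a)) in E at 1; apply add_cancel_l in E.
  exact (succ_neq_zero _ (eq_sym E)).
Qed.

Lemma pair_inj a b a' b' : pair a b = pair a' b' -> a = a' /\ b = b'.
Proof.
  intro E; destruct (le_gt_cases (add a b) (add a' b')) as [H | H].
  - destruct (lt_eq_cases _ _ H) as [Hs | Hs]; [|now destruct (pair_neq_of_lt _ _ _ _ Hs E)].
    unfold pair in E; rewrite Hs in E; apply add_cancel_l in E; subst a'.
    split; [reflexivity | exact (add_cancel_l _ _ _ Hs)].
  - now destruct (pair_neq_of_lt _ _ _ _ H (eq_sym E)).
Qed.

End PeanoArithmetic.

Section DefinableIsomorphism.

Variable M : structure.
Notation add1 := (interp M FAdd).
Notation mul1 := (interp M FMul).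
Notation add2 := (interp M FAdd').
Notation mul2 := (interp M FMul').
Hypothesis peano1 : Peano M add1 mul1.
Hypothesis peano2 : Peano M add2 mul2.
Variables z1 u1 z2 u2 : M.
Hypothesis z1_identity : is_identity add1 z1.
Hypothesis u1_identity : is_identity mul1 u1.
Hypothesis z2_identity : is_identity add2 z2.
Hypothesis u2_identity : is_identity mul2 u2.
Notation S1 x := (add1 x u1).
Notation S2 x := (add2 x u2).
Notation I1 L := (L M FAdd FMul peano1 z1 u1 z1_identity u1_identity).
Notation I2 L := (L M FAdd' FMul' peano2 z2 u2 z2_identity u2_identity).
Notation le1 := (le M FAdd).
Notation lt1 := (lt M FAdd u1).

Definition graph_mem c d N a b := in_code M FAdd FMul u1 c d N (pair M FAdd FMul a b).

Definition approx c d N x :=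
  (forall a b, graph_mem c d N a b -> le1 a x) /\
  (forall a, le1 a x -> exists b, graph_mem c d N a b) /\
  (forall a b b', graph_mem c d N a b -> graph_mem c d N a b' -> b = b') /\
  graph_mem c d N z1 z2 /\
  (forall a b, lt1 a x -> graph_mem c d N a b -> graph_mem c d N (S1 a) (S2 b)).

Definition iso_graph x y := exists c d N, approx c d N x /\ graph_mem c d N x y.

Lemma graph_insert c d N a0 b0 : exists c' d' N', forall a b,
  graph_mem c' d' N' a b <-> graph_mem c d N a b \/ (a = a0 /\ b = b0).
Proof.
  set (q := pair M FAdd FMul a0 b0).
  destruct (I1 code_insert c d N q (add1 N q)) as (c' & d' & H).
  exists c', d', (add1 N q); intros a b; unfold graph_mem; rewrite H; split.
  - intros [_ [K | K]]; [now left | right; now apply (I1 pair_inj)].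
  - intros [K | [-> ->]]; split.
    + apply (I1 le_trans _ N); [apply K | apply (I1 le_add_r)].
    + now left.
    + apply (I1 le_add_l).
    + now right.
Qed.

Lemma approx_zero_exists : exists c d N, approx c d N z1.
Proof.
  destruct (graph_insert u1 u1 z1 z1 z2) as (c & d & N & H).
  assert (H' : forall a b, graph_mem c d N a b <-> a = z1 /\ b = z2).
  { intros a b; rewrite H; split; [|now right].
    intros [K | K]; [|exact K].
    now destruct (I1 not_in_code_one u1 z1 _ (I1 one_neq_0) K). }
  exists c, d, N; refine (conj _ (conj _ (conj _ (conj _ _)))).
  - intros a b K; apply H' in K as [-> _]; apply (I1 le_refl).
  - intros a K; apply (I1 le_0_r) in K as ->; exists z2; now apply H'.
  - intros a b b' K1 K2; apply H' in K1 as [_ ->], K2 as [_ ->]; reflexivity.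
  - now apply H'.
  - intros a b K; now destruct (I1 nlt_0_r a K).
Qed.

Lemma approx_extend c d N x y : approx c d N x -> graph_mem c d N x y ->
  exists c' d' N', approx c' d' N' (S1 x) /\ graph_mem c' d' N' (S1 x) (S2 y).
Proof.
  intros (dom & total & func & zero & succ) Hxy.
  destruct (graph_insert c d N (S1 x) (S2 y)) as (c' & d' & N' & H).
  exists c', d', N'; split; [|apply H; now right].
  refine (conj _ (conj _ (conj _ (conj _ _)))).
  - intros a b K; apply H in K as [K | [-> _]]; [|apply (I1 le_refl)].
    apply (I1 le_succ_r), (dom _ _ K).
  - intros a K; destruct (I1 le_succ_r_cases _ _ K) as [K' | ->].
    + destruct (total a K') as [b Hb]; exists b; apply H; now left.
    + exists (S2 y); apply H; now right.
  - assert (new : forall a b, graph_mem c d N a b -> a <> S1 x).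
    { intros a b K ->; exact (I1 lt_irrefl _ (dom _ _ K)). }
    intros a b b' K1 K2; apply H in K1, K2.
    destruct K1 as [K1 | [-> ->]], K2 as [K2 | [? ->]].
    + exact (func _ _ _ K1 K2).
    + now destruct (new _ _ K1).
    + now destruct (new _ _ K2).
    + reflexivity.
  - apply H; now left.
  - intros a b K1 K2; apply (I1 lt_succ_r) in K1; apply H in K2 as [K2 | [-> _]].
    + destruct (I1 lt_eq_cases _ _ K1) as [-> | K1']; apply H.
      * right; now rewrite (func _ _ _ K2 Hxy).
      * left; exact (succ _ _ K1' K2).
    + exfalso; exact (I1 lt_irrefl _ K1).
Qed.

Lemma approx_exists x : exists c d N, approx c d N x.
Proof.
  revert x; definable_induction (I1 peano_ind); [exact approx_zero_exists|].
  intros x (c & d & N & Happrox).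
  destruct (proj1 (proj2 Happrox) x (I1 le_refl x)) as [y Hy].
  destruct (approx_extend c d N x y Happrox Hy) as (c' & d' & N' & K & _); eauto.
Qed.

Lemma iso_graph_total x : exists y, iso_graph x y.
Proof.
  destruct (approx_exists x) as (c & d & N & Happrox).
  destruct (proj1 (proj2 Happrox) x (I1 le_refl x)) as [y Hy].
  now exists y, c, d, N.
Qed.

Lemma iso_graph_zero : iso_graph z1 z2.
Proof.
  destruct approx_zero_exists as (c & d & N & Happrox).
  exists c, d, N; split; [exact Happrox | apply Happrox].
Qed.

Lemma iso_graph_succ x y : iso_graph x y -> iso_graph (S1 x) (S2 y).
Proof.
  intros (c & d & N & Happrox & Hxy).
  destruct (approx_extend c d N x y Happrox Hxy) as (c' & d' & N' & K); now exists c', d', N'.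
Qed.

Lemma approx_agree c d N c' d' N' x : approx c d N x -> approx c' d' N' x ->
  forall a, le1 a x -> forall b b', graph_mem c d N a b -> graph_mem c' d' N' a b' -> b = b'.
Proof.
  intros (_ & total & func & zero & succ) (_ & total' & func' & zero' & succ').
  definable_induction (I1 peano_ind).
  - intros _ b b' K K'; now rewrite (func _ _ _ K zero), (func' _ _ _ K' zero').
  - intros a IH Ha b b' K K'.
    assert (Hax : le1 a x) by exact (I1 lt_le_incl _ _ Ha).
    destruct (total a Hax) as [w Hw], (total' a Hax) as [w' Hw'].
    rewrite (func _ _ _ K (succ _ _ Ha Hw)), (func' _ _ _ K' (succ' _ _ Ha Hw')).
    now rewrite (IH Hax w w' Hw Hw').
Qed.

Lemma iso_graph_functional x y y' : iso_graph x y -> iso_graph x y' -> y = y'.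
Proof.
  intros (c & d & N & Happrox & K) (c' & d' & N' & Happrox' & K').
  exact (approx_agree c d N c' d' N' x Happrox Happrox' x (I1 le_refl x) _ _ K K').
Qed.

Lemma iso_graph_succ_l x b : iso_graph (S1 x) b -> exists w, iso_graph x w /\ b = S2 w.
Proof.
  intro Hb; destruct (iso_graph_total x) as [w Hw]; exists w; split; [exact Hw|].
  exact (iso_graph_functional _ _ _ Hb (iso_graph_succ _ _ Hw)).
Qed.

Lemma iso_graph_add y : forall x b c,
  iso_graph x b -> iso_graph y c -> iso_graph (add1 x y) (add2 b c).
Proof.
  revert y; definable_induction (I1 peano_ind).
  - intros x b c Hb Hc; rewrite <- (iso_graph_functional _ _ _ iso_graph_zero Hc).
    now rewrite (I1 add_0_r), (I2 add_0_r).
  - intros y IH x b c Hb Hc; destruct (iso_graph_succ_l y c Hc) as (w & Hw & ->).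
    rewrite (I1 add_succ_r), (I2 add_succ_r); exact (iso_graph_succ _ _ (IH x b w Hb Hw)).
Qed.

Lemma iso_graph_mul y : forall x b c,
  iso_graph x b -> iso_graph y c -> iso_graph (mul1 x y) (mul2 b c).
Proof.
  revert y; definable_induction (I1 peano_ind).
  - intros x b c Hb Hc; rewrite <- (iso_graph_functional _ _ _ iso_graph_zero Hc).
    rewrite (I1 mul_0_r), (I2 mul_0_r); exact iso_graph_zero.
  - intros y IH x b c Hb Hc; destruct (iso_graph_succ_l y c Hc) as (w & Hw & ->).
    rewrite (I1 mul_succ_r), (I2 mul_succ_r); exact (iso_graph_add _ _ _ _ (IH x b w Hb Hw) Hb).
Qed.

Lemma iso_graph_injective x : forall x' b, iso_graph x b -> iso_graph x' b -> x = x'.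
Proof.
  revert x; definable_induction (I1 peano_ind).
  - intros x' b Hb Hb'; rewrite <- (iso_graph_functional _ _ _ iso_graph_zero Hb) in Hb'.
    destruct (I1 zero_or_succ x') as [-> | [p ->]]; [reflexivity|].
    destruct (iso_graph_succ_l p _ Hb') as (w & _ & E); now destruct (I2 succ_neq_zero w).
  - intros x IH x' b Hb Hb'; destruct (iso_graph_succ_l x b Hb) as (w & Hw & ->).
    destruct (I1 zero_or_succ x') as [-> | [p ->]].
    + now destruct (I2 succ_neq_zero w (iso_graph_functional _ _ _ Hb' iso_graph_zero)).
    + destruct (iso_graph_succ_l p _ Hb') as (w' & Hw' & E).
      apply (I2 succ_inj) in E as <-; now rewrite (IH p w Hw Hw').
Qed.

Lemma iso_graph_surjective y : exists x, iso_graph x y.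
Proof.
  revert y; definable_induction (I2 peano_ind).
  - exists z1; exact iso_graph_zero.
  - intros y [x Hx]; exists (S1 x); now apply iso_graph_succ.
Qed.

(* No parameters are needed: the identity elements are eliminated through their defining laws. *)
Lemma iso_graph_expressible : expressible M (fun e => iso_graph (e 0) (e 1)).
Proof. solve_expressible. Qed.

Lemma reducts_definably_isomorphic :
  exists pi : M -> M, iso_reducts M pi /\ fo_definable_fun M pi.
Proof.
  destruct (functional_choice iso_graph iso_graph_total) as [pi Hpi].
  assert (graph : forall x y, iso_graph x y <-> pi x = y).
  { intros x y; split; [exact (iso_graph_functional _ _ _ (Hpi x)) | now intros <-]. }
  exists pi; split; [refine (conj _ (conj _ (conj _ _))) |].
  - intros x x' E; apply (iso_graph_injective x x' (pi x)); [|rewrite E]; apply Hpi.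
  - intro y; destruct (iso_graph_surjective y) as [x Hx]; exists x; now apply graph.
  - intros x y; apply graph, iso_graph_add; apply Hpi.
  - intros x y; apply graph, iso_graph_mul; apply Hpi.
  - destruct iso_graph_expressible as [psi Hpsi]; exists psi; intros e a b.
    rewrite Hpsi, graph; apply iff_refl.
Qed.

End DefinableIsomorphism.

Theorem mainTheorem3 (M : structure) :
  Peano M (s_add M) (s_mul M) ->
  Peano M (s_add' M) (s_mul' M) ->
  exists pi : M -> M, iso_reducts M pi /\ fo_definable_fun M pi.
Proof.
  intros peano1 peano2.
  destruct (proj1 peano1) as [z1 z1_identity], (proj1 (proj2 peano1)) as [u1 u1_identity].
  destruct (proj1 peano2) as [z2 z2_identity], (proj1 (proj2 peano2)) as [u2 u2_identity].
  exact (reducts_definably_isomorphic M peano1 peano2 z1 u1 z2 u2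
           z1_identity u1_identity z2_identity u2_identity).
Qed.
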